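(* Let $(\mathcal Q,d)$ be a Hadamard space, let $\gamma:I_\gamma\to\mathcal Q$ be a unit-speed geodesic and let $y\in\mathcal Q$. Then the function $I_\gamma\to\mathbb R$, $t\mapsto d(y,\gamma(t))$, is $\mathcal G$-convex.
   Context: A Hadamard space is a complete metric space $(\mathcal Q,d)$ such that for all $y_0,y_1$ there is $m$ with $\frac12 d(y_0,q)^2+\frac12 d(y_1,q)^2-\frac14 d(y_0,y_1)^2\ge d(q,m)^2$ for all $q$. A unit-speed geodesic is a map $\gamma:I_\gamma\to\mathcal Q$ on an interval $I_\gamma\subset\mathbb R$ with $d(\gamma(s),\gamma(t))=|s-t|$. $\mathcal G:=\{t\mapsto\sqrt{(t-t_0)^2+h^2}:\ t_0\in\mathbb R,\ h\ge0\}$; a function $f:I\to\mathbb R$ on an interval $I$ is $\mathcal G$-convex if for every $t_0\in I$ there is $g\in\mathcal G$ with $g(t_0)=f(t_0)$ and $g(s)\le f(s)$ for all $s\in I$. *)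

From Stdlib Require Import Reals Lra.
Open Scope R_scope.

Definition is_metric {Q : Type} (d : Q -> Q -> R) : Prop :=
  (forall x y, 0 <= d x y) /\
  (forall x y, d x y = 0 <-> x = y) /\
  (forall x y, d x y = d y x) /\
  (forall x y z, d x z <= d x y + d y z).

Definition metric_complete {Q : Type} (d : Q -> Q -> R) : Prop :=
  forall u : nat -> Q,
    (forall eps, 0 < eps -> exists N, forall m n, (N <= m)%nat -> (N <= n)%nat ->
        d (u m) (u n) < eps) ->
    exists l, forall eps, 0 < eps -> exists N, forall n, (N <= n)%nat -> d (u n) l < eps.

Definition Hadamard {Q : Type} (d : Q -> Q -> R) : Prop :=
  is_metric d /\ metric_complete d /\
  forall y0 y1 : Q, exists m : Q, forall q : Q,
    / 2 * (d y0 q) ^ 2 + / 2 * (d y1 q) ^ 2 - / 4 * (d y0 y1) ^ 2 >= (d q m) ^ 2.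

Definition is_interval (I : R -> Prop) : Prop :=
  forall a b c, I a -> I c -> a <= b <= c -> I b.

Definition unit_speed_geodesic {Q : Type} (d : Q -> Q -> R) (I : R -> Prop)
  (gamma : R -> Q) : Prop :=
  forall s t, I s -> I t -> d (gamma s) (gamma t) = Rabs (s - t).

Definition in_G (g : R -> R) : Prop :=
  exists t0 h, 0 <= h /\ forall t, g t = sqrt ((t - t0) ^ 2 + h ^ 2).

Definition G_convex (I : R -> Prop) (f : R -> R) : Prop :=
  forall t0, I t0 -> exists g, in_G g /\ g t0 = f t0 /\ forall s, I s -> g s <= f s.

(** Let [F t := d(y, gamma t)].  The proof separates the metric input from a
    purely real-variable argument.

    - Metric part.  [F] is nonnegative and 1-Lipschitz (reverse triangle
      inequality), and since [gamma ((p+q)/2)] is a metric midpoint of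
      [gamma p] and [gamma q], the Hadamard (CN) inequality yields
      [F((p+q)/2)^2 <= F(p)^2/2 + F(q)^2/2 - (p-q)^2/4].
    - Real part.  This inequality says exactly that [phi t := F t^2 - t^2] is
      midpoint convex.  As [phi] is continuous, a maximum principle makes it
      convex.  The Lipschitz bound controls the one-sided slopes of [phi] at
      any [t0]: left slopes are at most [B := -2 t0 + 2 F t0] and right slopes
      at least [A := -2 t0 - 2 F t0].  The supremum [k] of the left slopes is
      a supporting slope with [A <= k <= B], i.e.
      [F s^2 >= (s - c)^2 + h^2] with equality at [t0], where [c = -k/2] and
      [h^2 = F t0^2 - (t0 - c)^2 >= 0].  Taking square roots gives the minorant
      [s |-> sqrt((s - c)^2 + h^2)] of [F] from the family G touching at [t0]. *)

From Stdlib Require Import Reals Lra Psatz.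
Open Scope R_scope.

(** ** Metric part *)

Lemma dist_reverse_triangle {Q : Type} (d : Q -> Q -> R) (y p q : Q) :
  is_metric d -> Rabs (d y p - d y q) <= d p q.
Proof.
  intros (_ & _ & Hsym & Htri).
  pose proof (Htri y p q). pose proof (Htri y q p).
  rewrite (Hsym q p) in *. apply Rabs_le; lra.
Qed.

(** In a Hadamard space every metric midpoint [q] of [y0] and [y1] satisfies
    the CN inequality: the point [m] provided by the definition is at distance
    0 from [q], hence may be replaced by [q]. *)
Lemma Hadamard_metric_midpoint_CN {Q : Type} (d : Q -> Q -> R) (y0 y1 q y : Q) :
  Hadamard d -> d y0 q = d y0 y1 / 2 -> d y1 q = d y0 y1 / 2 ->
  d y q ^ 2 <= / 2 * d y0 y ^ 2 + / 2 * d y1 y ^ 2 - / 4 * d y0 y1 ^ 2.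
Proof.
  intros [[Hpos [_ [Hsym Htri]]] [_ Hmid]] Hq0 Hq1.
  destruct (Hmid y0 y1) as [m Hm].
  assert (Hqm : d q m = 0).
  { pose proof (Hm q) as Hmq. rewrite Hq0, Hq1 in Hmq.
    pose proof (Hpos q m). nra. }
  assert (Hyq : d y q <= d y m).
  { pose proof (Htri y m q). rewrite (Hsym m q), Hqm in *. lra. }
  pose proof (Hm y). rewrite (Hsym y0 y), (Hsym y1 y) in *.
  pose proof (Hpos y q). nra.
Qed.

Lemma interval_midpoint (I : R -> Prop) (p q : R) :
  is_interval I -> I p -> I q -> I ((p + q) / 2).
Proof.
  intros HI Hp Hq. destruct (Rle_dec p q).
  - apply (HI p _ q); auto; lra.
  - apply (HI q _ p); auto; lra.
Qed.

Lemma geodesic_dist_midpoint {Q : Type} (d : Q -> Q -> R) (I : R -> Prop)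
    (gamma : R -> Q) (y : Q) (p q : R) :
  Hadamard d -> is_interval I -> unit_speed_geodesic d I gamma -> I p -> I q ->
  d y (gamma ((p + q) / 2)) ^ 2 <=
    / 2 * d y (gamma p) ^ 2 + / 2 * d y (gamma q) ^ 2 - / 4 * (p - q) ^ 2.
Proof.
  intros Hd HI Hg Hp Hq.
  assert (Hr : I ((p + q) / 2)) by (apply interval_midpoint; auto).
  assert (Hsym : forall u v, d u v = d v u) by (destruct Hd as [(_ & _ & S & _) _]; exact S).
  rewrite (Hsym y (gamma p)), (Hsym y (gamma q)), <- (pow2_abs (p - q)), <- (Hg p q Hp Hq).
  apply Hadamard_metric_midpoint_CN; auto; rewrite !Hg by auto;
    unfold Rabs; repeat destruct Rcase_abs; lra.
Qed.

(** ** Midpoint convexity and convexity *)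

Definition midpoint_convex (J : R -> Prop) (g : R -> R) : Prop :=
  forall p q, J p -> J q -> g ((p + q) / 2) <= (g p + g q) / 2.

Definition convex_on (J : R -> Prop) (g : R -> R) : Prop :=
  forall a x b, J a -> J b -> a < x < b ->
    g x * (b - a) <= g a * (b - x) + g b * (x - a).

(** At an interior
    maximum [M], reflecting an endpoint through [M] stays in [[a, b]] and
    contradicts midpoint convexity. *)
Lemma midpoint_convex_max_principle (g : R -> R) (a b : R) :
  continuity g -> midpoint_convex (fun t => a <= t <= b) g ->
  g a <= 0 -> g b <= 0 -> forall x, a <= x <= b -> g x <= 0.
Proof.
  intros Hc Hmid Ha Hb x Hx.
  destruct (continuity_ab_maj g a b ltac:(lra) (fun c _ => Hc c)) as [M [HM HMab]].
  destruct (Rle_dec (g M) 0) as [HgM | HgM].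
  { pose proof (HM x Hx). lra. }
  assert (M <> a) by (intros ->; lra).
  assert (M <> b) by (intros ->; lra).
  destruct (Rle_dec (M - a) (b - M)).
  - pose proof (Hmid a (2 * M - a) ltac:(lra) ltac:(lra)) as Hm.
    replace ((a + (2 * M - a)) / 2) with M in Hm by field.
    pose proof (HM (2 * M - a) ltac:(lra)). lra.
  - pose proof (Hmid (2 * M - b) b ltac:(lra) ltac:(lra)) as Hm.
    replace ((2 * M - b + b) / 2) with M in Hm by field.
    pose proof (HM (2 * M - b) ltac:(lra)). lra.
Qed.

(** A continuous function midpoint convex on [[a, b]] lies below its chord
    over [[a, b]]: apply the maximum principle to [g] minus the chord. *)
Lemma continuous_midpoint_convex_chord (g : R -> R) (a b : R) :
  continuity g -> midpoint_convex (fun t => a <= t <= b) g ->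
  forall x, a < x < b -> g x * (b - a) <= g a * (b - x) + g b * (x - a).
Proof.
  intros Hc Hmid x Hx.
  set (h := fun t => g t * (b - a) - ((g b - g a) * t + (g a * b - g b * a))).
  assert (Hhc : continuity h).
  { apply (continuity_minus (fun t => g t * (b - a))); [|reg].
    apply (continuity_mult g (fun _ => b - a)); [exact Hc | reg]. }
  assert (Hhmid : midpoint_convex (fun t => a <= t <= b) h).
  { intros p q Hp Hq. pose proof (Hmid p q Hp Hq).
    assert (g ((p + q) / 2) * (b - a) <= (g p + g q) / 2 * (b - a))
      by (apply Rmult_le_compat_r; lra).
    unfold h. lra. }
  pose proof (midpoint_convex_max_principle h a b Hhc Hhmid
                ltac:(unfold h; lra) ltac:(unfold h; lra) x ltac:(lra)).
  unfold h in *. lra.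
Qed.

(** ** Supporting lines of convex functions *)

Definition slope (g : R -> R) (s t : R) : R := (g t - g s) / (t - s).

Lemma slope_spec (g : R -> R) (s t : R) : s <> t -> g t = g s + slope g s t * (t - s).
Proof. intros Hst. unfold slope. field. lra. Qed.

Section SupportingLine.

Variable I : R -> Prop.
Variable phi : R -> R.
Hypothesis HI : is_interval I.
Hypothesis Hconv : convex_on I phi.

Lemma convex_slopes (a x b : R) : I a -> I b -> a < x < b ->
  slope phi a x <= slope phi a b /\ slope phi a b <= slope phi x b.
Proof.
  intros Ha Hb Hx. pose proof (Hconv a x b Ha Hb Hx) as Hc.
  pose proof (slope_spec phi a x ltac:(lra)) as Hax.
  pose proof (slope_spec phi a b ltac:(lra)) as Hab.
  pose proof (slope_spec phi x b ltac:(lra)) as Hxb.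
  set (p := slope phi a x) in *; set (q := slope phi a b) in *;
    set (r := slope phi x b) in *.
  assert (Hpq : p <= q).
  { apply (Rmult_le_reg_r ((x - a) * (b - a))); [nra|].
    rewrite Hax, Hab in Hc. nra. }
  split; [exact Hpq|].
  apply (Rmult_le_reg_r (b - x)); [lra|].
  assert (q * (b - a) = p * (x - a) + r * (b - x)) by lra.
  nra.
Qed.

(** If the left slopes at [t0] are bounded by [B] up to an error vanishing at
    [t0], they are bounded by [B]: left slopes increase towards [t0]. *)
Lemma left_slope_bound (t0 B : R) : I t0 ->
  (forall s, I s -> s < t0 -> slope phi s t0 <= B + (t0 - s)) ->
  forall s, I s -> s < t0 -> slope phi s t0 <= B.
Proof.
  intros Ht0 Hloc s Hs Hst. apply Rle_plus_epsilon. intros eps Heps.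
  set (s' := Rmax s (t0 - eps)).
  assert (Hs' : s <= s' < t0) by (unfold s', Rmax; destruct Rle_dec; lra).
  assert (Is' : I s') by (apply (HI s _ t0); auto; lra).
  pose proof (Hloc s' Is' ltac:(lra)).
  assert (slope phi s t0 <= slope phi s' t0).
  { destruct (Req_dec s s') as [<- | Hne]; [lra|].
    apply (proj2 (convex_slopes s s' t0 Hs Ht0 ltac:(lra))). }
  assert (t0 - s' <= eps) by (unfold s'; pose proof (Rmax_r s (t0 - eps)); lra).
  lra.
Qed.

Lemma right_slope_bound (t0 A : R) : I t0 ->
  (forall u, I u -> t0 < u -> A - (u - t0) <= slope phi t0 u) ->
  forall u, I u -> t0 < u -> A <= slope phi t0 u.
Proof.
  intros Ht0 Hloc u Hu Hut.
  cut (- slope phi t0 u <= - A); [lra|].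
  apply Rle_plus_epsilon. intros eps Heps.
  set (u' := Rmin u (t0 + eps)).
  assert (Hu' : t0 < u' <= u) by (unfold u', Rmin; destruct Rle_dec; lra).
  assert (Iu' : I u') by (apply (HI t0 _ u); auto; lra).
  pose proof (Hloc u' Iu' ltac:(lra)).
  assert (slope phi t0 u' <= slope phi t0 u).
  { destruct (Req_dec u u') as [<- | Hne]; [lra|].
    apply (proj1 (convex_slopes t0 u' u Ht0 Hu ltac:(lra))). }
  assert (u' - t0 <= eps) by (unfold u'; pose proof (Rmin_r u (t0 + eps)); lra).
  lra.
Qed.

(** A convex function whose left slopes at [t0] are at most [B] and whose
    right slopes are at least [A <= B] has a supporting line at [t0] with
    slope in [[A, B]]: take the supremum of [A] and the left slopes. *)
Lemma supporting_line (t0 A B : R) : I t0 -> A <= B ->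
  (forall s, I s -> s < t0 -> slope phi s t0 <= B) ->
  (forall u, I u -> t0 < u -> A <= slope phi t0 u) ->
  exists k, A <= k <= B /\ forall s, I s -> phi t0 + k * (s - t0) <= phi s.
Proof.
  intros Ht0 HAB Hleft Hright.
  set (E := fun k => k = A \/ exists s, I s /\ s < t0 /\ k = slope phi s t0).
  destruct (completeness E) as [k [Hub Hlub]].
  { exists B. intros k [-> | [s (Hs & Hst & ->)]]; auto. }
  { exists A. left; reflexivity. }
  assert (HkA : A <= k) by (apply Hub; left; reflexivity).
  assert (HkB : k <= B) by (apply Hlub; intros k' [-> | [s (Hs & Hst & ->)]]; auto).
  exists k. split; [lra|]. intros s Hs.
  destruct (Rtotal_order s t0) as [Hlt | [-> | Hgt]].
  - assert (slope phi s t0 <= k) by (apply Hub; right; exists s; auto).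
    rewrite (slope_spec phi s t0) by lra. nra.
  - lra.
  - assert (k <= slope phi t0 s).
    { apply Hlub. intros k' [-> | [s' (Hs' & Hst & ->)]]; [auto|].
      pose proof (convex_slopes s' t0 s Hs' Hs ltac:(lra)). lra. }
    rewrite (slope_spec phi t0 s) by lra. nra.
Qed.

End SupportingLine.

(** ** From a supporting parabola to G-convexity *)

Lemma G_convex_of_supporting_parabola (I : R -> Prop) (F : R -> R) :
  (forall t, I t -> 0 <= F t) ->
  (forall t0, I t0 -> exists c, (t0 - c) ^ 2 <= F t0 ^ 2 /\
     forall s, I s -> (s - c) ^ 2 + (F t0 ^ 2 - (t0 - c) ^ 2) <= F s ^ 2) ->
  G_convex I F.
Proof.
  intros HF0 Hpar t0 Ht0.
  destruct (Hpar t0 Ht0) as [c [Hc Hs]].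
  set (h := sqrt (F t0 ^ 2 - (t0 - c) ^ 2)).
  assert (Hh : h ^ 2 = F t0 ^ 2 - (t0 - c) ^ 2)
    by (unfold h; rewrite <- Rsqr_pow2; apply Rsqr_sqrt; lra).
  exists (fun t => sqrt ((t - c) ^ 2 + h ^ 2)). repeat split.
  - exists c, h. split; [apply sqrt_pos | reflexivity].
  - cbv beta. rewrite Hh. replace ((t0 - c) ^ 2 + (F t0 ^ 2 - (t0 - c) ^ 2))
      with (F t0 ^ 2) by ring. apply sqrt_pow2, HF0, Ht0.
  - intros s Is. cbv beta. rewrite Hh, <- (sqrt_pow2 (F s)) by auto.
    apply sqrt_le_1_alt, Hs, Is.
Qed.

(** ** The real-variable theorem *)

(** Clamping to [[a, b]] is a 1-Lipschitz retraction onto [[a, b]]; composing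
    with it turns a function that is Lipschitz on [[a, b]] into a function
    continuous on all of [R], as required by [continuity_ab_maj]. *)
Definition clamp (a b t : R) : R := Rmax a (Rmin b t).

Lemma clamp_in (a b t : R) : a <= b -> a <= clamp a b t <= b.
Proof. intros. unfold clamp, Rmax, Rmin; repeat destruct Rle_dec; lra. Qed.

Lemma clamp_id (a b t : R) : a <= t <= b -> clamp a b t = t.
Proof. intros. unfold clamp, Rmax, Rmin; repeat destruct Rle_dec; lra. Qed.

Lemma clamp_lipschitz (a b s t : R) : a <= b ->
  Rabs (clamp a b s - clamp a b t) <= Rabs (s - t).
Proof.
  intros. unfold clamp, Rmax, Rmin; repeat destruct Rle_dec; unfold Rabs;
  repeat destruct Rcase_abs; lra.
Qed.

Lemma lipschitz_continuity (f : R -> R) :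
  (forall s t, Rabs (f s - f t) <= Rabs (s - t)) -> continuity f.
Proof.
  intros Hf x eps Heps. exists eps. split; [lra|].
  intros x0 [_ Hx]. simpl in *. unfold R_dist in *.
  eapply Rle_lt_trans; [apply Hf | exact Hx].
Qed.

Section LipschitzMidpoint.

Variable I : R -> Prop.
Variable F : R -> R.
Hypothesis HI : is_interval I.
Hypothesis HF0 : forall t, I t -> 0 <= F t.
Hypothesis HFlip : forall s t, I s -> I t -> Rabs (F s - F t) <= Rabs (s - t).
Hypothesis HFmid : forall p q, I p -> I q ->
  F ((p + q) / 2) ^ 2 <= / 2 * F p ^ 2 + / 2 * F q ^ 2 - / 4 * (p - q) ^ 2.

Let phi (t : R) : R := F t ^ 2 - t ^ 2.

Lemma phi_midpoint_convex : midpoint_convex I phi.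
Proof.
  intros p q Hp Hq. pose proof (HFmid p q Hp Hq). unfold phi.
  replace (((p + q) / 2) ^ 2) with (/ 2 * p ^ 2 + / 2 * q ^ 2 - / 4 * (p - q) ^ 2)
    by field.
  lra.
Qed.

(** [phi] is convex on [I]: on each [[a, b]] it agrees with the continuous
    function [phi o clamp a b], to which the chord lemma applies. *)
Lemma phi_convex : convex_on I phi.
Proof.
  intros a x b Ha Hb Hx.
  assert (Hsub : forall t, a <= t <= b -> I t) by (intros t Ht; apply (HI a t b); auto).
  set (C := clamp a b).
  assert (HCc : continuity C)
    by (apply lipschitz_continuity; intros; apply clamp_lipschitz; lra).
  assert (HFc : continuity (fun t => F (C t))).
  { apply lipschitz_continuity. intros s t.
    eapply Rle_trans; [apply HFlip; apply Hsub, clamp_in; lra|].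
    apply clamp_lipschitz; lra. }
  assert (Hsq : forall f, continuity f -> continuity (fun t => f t ^ 2))
    by (intros f Hf; apply (continuity_comp f (fun u => u ^ 2)); [exact Hf | reg]).
  assert (Hc : continuity (fun t => phi (C t)))
    by (apply (continuity_minus (fun t => F (C t) ^ 2)); apply Hsq; assumption).
  assert (HC : forall t, a <= t <= b -> phi (C t) = phi t)
    by (intros t Ht; unfold C; rewrite clamp_id by lra; reflexivity).
  assert (Hmid : midpoint_convex (fun t => a <= t <= b) (fun t => phi (C t))).
  { intros p q Hp Hq. rewrite !HC by lra.
    apply phi_midpoint_convex; apply Hsub; assumption. }
  pose proof (continuous_midpoint_convex_chord _ a b Hc Hmid x Hx) as Hchord.
  cbv beta in Hchord. rewrite !HC in Hchord by lra. exact Hchord.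
Qed.

Lemma sq_drop_bound (t0 s : R) : I t0 -> I s ->
  F t0 ^ 2 - F s ^ 2 <= 2 * F t0 * Rabs (s - t0).
Proof.
  intros Ht0 Hs. pose proof (HF0 t0 Ht0). pose proof (HF0 s Hs).
  pose proof (HFlip t0 s Ht0 Hs) as Hl. rewrite (Rabs_minus_sym t0 s) in Hl.
  pose proof (Rle_abs (F t0 - F s)). pose proof (Rabs_pos (s - t0)).
  set (r := Rabs (s - t0)) in *.
  destruct (Rle_dec (F t0) r) as [Hsmall | Hlarge].
  - pose proof (Rmult_le_compat_l (F t0) _ _ H Hsmall). nra.
  - assert (Hfs : F t0 - r <= F s) by lra.
    pose proof (Rmult_le_compat (F t0 - r) (F s) (F t0 - r) (F s)
                  ltac:(lra) ltac:(lra) Hfs Hfs). nra.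
Qed.

Lemma phi_left_slope_local (t0 : R) : I t0 -> forall s, I s -> s < t0 ->
  slope phi s t0 <= (- 2 * t0 + 2 * F t0) + (t0 - s).
Proof.
  intros Ht0 s Hs Hst. pose proof (sq_drop_bound t0 s Ht0 Hs) as Hb.
  rewrite Rabs_left in Hb by lra.
  pose proof (slope_spec phi s t0 ltac:(lra)) as Hk.
  set (k := slope phi s t0) in *. unfold phi in Hk.
  apply (Rmult_le_reg_r (t0 - s)); [lra|]. nra.
Qed.

Lemma phi_right_slope_local (t0 : R) : I t0 -> forall u, I u -> t0 < u ->
  (- 2 * t0 - 2 * F t0) - (u - t0) <= slope phi t0 u.
Proof.
  intros Ht0 u Hu Hut. pose proof (sq_drop_bound t0 u Ht0 Hu) as Hb.
  rewrite Rabs_right in Hb by lra.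
  pose proof (slope_spec phi t0 u ltac:(lra)) as Hk.
  set (k := slope phi t0 u) in *. unfold phi in Hk.
  apply (Rmult_le_reg_r (u - t0)); [lra|]. nra.
Qed.

(** Conclusion: [phi] has at [t0] a supporting line of slope
    [k] in [[-2 t0 - 2 F t0, -2 t0 + 2 F t0]], which is a supporting
    parabola for [F^2] with vertex [c = -k/2]. *)
Theorem lipschitz_CN_G_convex : G_convex I F.
Proof.
  apply G_convex_of_supporting_parabola; [exact HF0|]. intros t0 Ht0.
  pose proof (HF0 t0 Ht0).
  destruct (supporting_line I phi phi_convex t0
              (- 2 * t0 - 2 * F t0) (- 2 * t0 + 2 * F t0) Ht0 ltac:(lra)
              (left_slope_bound I phi HI phi_convex t0 _ Ht0
                 (phi_left_slope_local t0 Ht0))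
              (right_slope_bound I phi HI phi_convex t0 _ Ht0
                 (phi_right_slope_local t0 Ht0)))
    as [k [Hk Hsupp]].
  exists (- k / 2). split; [nra|].
  intros s Hs. pose proof (Hsupp s Hs). unfold phi in *. nra.
Qed.

End LipschitzMidpoint.

Theorem mainTheorem15 (Q : Type) (d : Q -> Q -> R) (I : R -> Prop) (gamma : R -> Q) (y : Q) :
  Hadamard d -> is_interval I -> unit_speed_geodesic d I gamma ->
  G_convex I (fun t => d y (gamma t)).
Proof.
  intros Hd HI Hg.
  assert (Hmetric : is_metric d) by apply Hd.
  apply (lipschitz_CN_G_convex I).
  - exact HI.
  - intros t _. apply Hmetric.
  - intros s t Hs Ht. rewrite <- (Hg s t Hs Ht). apply dist_reverse_triangle, Hmetric.
  - intros p q Hp Hq. apply (geodesic_dist_midpoint d I); assumption.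
Qed.
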